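(* Let $k,n$ be integers with $k\geq 4$ and $n\geq 2$, and let $c$ be an exact $k$-coloring of $\mathcal{B}_n$ with $c(\emptyset)\neq c([n])$. If $\mathcal{B}_n$ contains no rainbow induced copy of $\mathcal{B}_2$, then any two sets $X,Y$ with $c(X),c(Y)\notin\{c(\emptyset),c([n])\}$ and $c(X)\neq c(Y)$ are comparable.
   Context: $\mathcal{B}_n$ is the Boolean lattice of subsets of $[n]$ under inclusion. An exact $k$-coloring is a surjective map $c:\mathcal{B}_n\to[k]$. A rainbow induced copy of $\mathcal{B}_2$ is four sets $W_1,W_2,W_3,W_4$ with $W_1\subsetneq W_2\subsetneq W_4$, $W_1\subsetneq W_3\subsetneq W_4$, $W_2,W_3$ incomparable, and pairwise distinct colors. *)

From mathcomp Require Import all_boot.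
Set Implicit Arguments. Unset Strict Implicit. Unset Printing Implicit Defensive.

Definition exact_coloring (n k : nat) (c : {set 'I_n} -> 'I_k) : Prop :=
  forall i : 'I_k, exists X : {set 'I_n}, c X = i.

Definition rainbow_B2 (n k : nat) (c : {set 'I_n} -> 'I_k)
  (W1 W2 W3 W4 : {set 'I_n}) : Prop :=
  [/\ W1 \proper W2, W2 \proper W4, W1 \proper W3 & W3 \proper W4] /\
  (~~ (W2 \subset W3) /\ ~~ (W3 \subset W2)) /\
  uniq [:: c W1; c W2; c W3; c W4].

Definition has_rainbow_B2 (n k : nat) (c : {set 'I_n} -> 'I_k) : Prop :=
  exists W1 W2 W3 W4, rainbow_B2 c W1 W2 W3 W4.

From mathcomp Require Import all_boot.

(* If X and Y are incomparable, then set0 < X, Y < setT, so set0, X, Y, setT is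
   an induced copy of B_2; its four colors are distinct as soon as c X, c Y are
   distinct and avoid c set0 != c setT. *)

Section Incomparable.

Variable T : finType.
Implicit Types A B : {set T}.

Lemma proper0_nsub A B : ~~ (A \subset B) -> set0 \proper A.
Proof. by rewrite proper0; apply: contraNneq => ->; rewrite sub0set. Qed.

Lemma properT_nsub A B : ~~ (B \subset A) -> A \proper setT.
Proof. by rewrite properT; apply: contraNneq => ->; rewrite subsetT. Qed.

End Incomparable.

Lemma rainbow_B2_bot_top (n k : nat) (c : {set 'I_n} -> 'I_k) (X Y : {set 'I_n}) :
  ~~ (X \subset Y) -> ~~ (Y \subset X) ->
  uniq [:: c set0; c X; c Y; c setT] -> rainbow_B2 c set0 X Y setT.
Proof.
move=> nXY nYX colors; split; last by split.
split; [exact: proper0_nsub nXY | exact: properT_nsub nYX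
       | exact: proper0_nsub nYX | exact: properT_nsub nXY].
Qed.

Theorem lemma2p6 (k n : nat) (c : {set 'I_n} -> 'I_k) :
  4 <= k -> 2 <= n -> exact_coloring c ->
  c set0 != c setT ->
  ~ has_rainbow_B2 c ->
  forall X Y : {set 'I_n},
    c X \notin [:: c set0; c setT] ->
    c Y \notin [:: c set0; c setT] ->
    c X != c Y ->
    (X \subset Y) || (Y \subset X).
Proof.
move=> _ _ _ c0T no_rainbow X Y cX cY cXY.
apply/negPn/negP; rewrite negb_or => /andP[nXY nYX].
apply: no_rainbow; exists set0, X, Y, setT.
apply: rainbow_B2_bot_top => //.
move: cX cY; rewrite !inE !negb_or => /andP[cX0 cXT] /andP[cY0 cYT].
by rewrite /= !inE !negb_or (eq_sym (c set0)) cX0 (eq_sym (c set0)) cY0 c0T cXY cXT cYT.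
Qed.
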